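(* Let $a,b,x\ge0$ be integers and $p\in[0,1]$, $q=1-p$. If all transition probabilities $p(r,s)$, $r,s>0$, equal $p$, then $$B(a,b,x)=\sum_{t=0}^{x}\binom{a+b+x}{a+t}p^{a+t}q^{b+x-t}.$$
   Context: Constrained walks: let $p(r,s)\in[0,1]$ be given for all integers $r,s>0$. A walker at a lattice point $(r,s)$ with $r,s>0$ moves West to $(r-1,s)$ with probability $p(r,s)$ and South to $(r,s-1)$ with probability $1-p(r,s)$, independently of the past; a walker at a point $(r,0)$ with $r>0$ always moves West, and a walker at $(0,s)$ with $s>0$ always moves South, until the origin is reached. Two walkers $U$ and $L$ start at $(a,b+x+1)$ and $(a+x+1,b)$ respectively and move simultaneously and independently, one step per time unit. $B(a,b,x)$ is the probability that the first time the two walkers occupy the same lattice point is when they both reach the origin. *)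

From mathcomp Require Import all_boot all_order all_algebra.
Set Implicit Arguments. Unset Strict Implicit. Unset Printing Implicit Defensive.
Import Order.TTheory GRing.Theory Num.Theory.
Local Open Scope ring_scope.

Section Walks.
Variable R : realFieldType.

(* A move is a bool: true = West (r decreases), false = South (s decreases). *)
Definition step (rs : nat * nat) (w : bool) : nat * nat :=
  if w then (rs.1.-1, rs.2) else (rs.1, rs.2.-1).

(* On the axes the move is forced; from the origin no move is taken
   (probability 0; never used for walks of the relevant length). *)
Definition stepP (P : nat -> nat -> R) (rs : nat * nat) (w : bool) : R :=
  let: (r, s) := rs in
  if (0 < r)%N && (0 < s)%N then (if w then P r s else 1 - P r s)
  else if (0 < r)%N then (if w then 1 else 0)
  else if (0 < s)%N then (if w then 0 else 1)
  else 0.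

Fixpoint walkP (P : nat -> nat -> R) (rs : nat * nat) (ws : seq bool) : R :=
  match ws with
  | [::] => 1
  | w :: ws' => stepP P rs w * walkP P (step rs w) ws'
  end.

Definition posn (rs : nat * nat) (ws : seq bool) (t : nat) : nat * nat :=
  foldl step rs (take t ws).

(* B(a,b,x): U starts at (a, b+x+1), L at (a+x+1, b); both reach the origin
   exactly at time n = a+b+x+1. The event is that at no time t < n the two
   walkers occupy the same lattice point. *)
Definition B (P : nat -> nat -> R) (a b x : nat) : R :=
  let n := (a + b + x).+1 in
  \sum_(u : n.-tuple bool) \sum_(l : n.-tuple bool)
    (if [forall t : 'I_n, posn (a, b + x.+1)%N u t != posn (a + x.+1, b)%N l t]
     then walkP P (a, b + x.+1)%N u * walkP P (a + x.+1, b)%N l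
     else 0).
End Walks.

From mathcomp Require Import all_boot all_order all_algebra.
From mathcomp Require Import zify ring.
Set Implicit Arguments. Unset Strict Implicit. Unset Printing Implicit Defensive.
Import Order.TTheory GRing.Theory Num.Theory.
Local Open Scope ring_scope.

(* Both walkers always lie on the same antidiagonal r + s = n, where n is the
   remaining time, so the state is described by their abscissae r1 <= r2.
   Conditioning on the first pair of moves, the probability that they never
   meet obeys Pascal's rule for the binomial distribution; meeting is the
   empty window r1 = r2. Hence it equals P(r1 <= Bin(n - 1, p) < r2). *)

Lemma forall_ord_recl n (f : 'I_n.+1 -> bool) :
  [forall t, f t] = f ord0 && [forall t : 'I_n, f (lift ord0 t)].
Proof.
apply/forallP/andP => [ft|[f0 /forallP ft] t]; first by split=> //; apply/forallP.
by case: (unliftP ord0 t) => [j ->|->].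
Qed.

Section TupleSums.
Variables (V : nmodType) (T : finType).

Lemma big_tuple0 (F : 0.-tuple T -> V) : \sum_(u : 0.-tuple T) F u = F [tuple].
Proof. by rewrite (big_pred1 [tuple]) // => u /=; rewrite [u]tuple0; apply/eqP. Qed.

Lemma big_tupleS n (F : n.+1.-tuple T -> V) :
  \sum_(u : n.+1.-tuple T) F u =
  \sum_(w : T) \sum_(u : n.-tuple T) F (cons_tuple w u).
Proof.
rewrite pair_big /= (reindex (fun wu => cons_tuple wu.1 wu.2)) //=.
exists (fun u : n.+1.-tuple T => (thead u, behead_tuple u)) => [[w u]|u] _ /=.
- by congr pair; apply: val_inj.
- by rewrite [RHS]tuple_eta; apply: val_inj.
Qed.

End TupleSums.

Section AvoidingWalks.
Variables (R : realFieldType) (P : nat -> nat -> R).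

Definition avoidP (U L : nat * nat) (n : nat) : R :=
  \sum_(u : n.-tuple bool) \sum_(l : n.-tuple bool)
    (if [forall t : 'I_n, posn U u t != posn L l t]
     then walkP P U u * walkP P L l else 0).

Lemma B_avoidP a b x :
  B P a b x = avoidP (a, b + x.+1)%N (a + x.+1, b)%N (a + b + x).+1.
Proof. by []. Qed.

Lemma avoidP0 U L : avoidP U L 0 = 1.
Proof.
rewrite /avoidP !big_tuple0 /= mulr1.
by rewrite (_ : [forall t : 'I_0, _]) //; apply/forallP => -[].
Qed.

Lemma avoidPS U L n : avoidP U L n.+1 =
  if U == L then 0 else
  \sum_(w1 : bool) \sum_(w2 : bool)
    stepP P U w1 * stepP P L w2 * avoidP (step U w1) (step L w2) n.
Proof.
rewrite /avoidP big_tupleS; have [<-|neqUL] := eqVneq U L.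
  apply: big1 => w1 _; apply: big1 => u _; rewrite big_tupleS.
  by apply: big1 => w2 _; apply: big1 => l _; rewrite forall_ord_recl eqxx.
apply: eq_bigr => w1 _; under eq_bigr => u _ do rewrite big_tupleS.
rewrite exchange_big; apply: eq_bigr => w2 _.
rewrite mulr_sumr; apply: eq_bigr => u _; rewrite mulr_sumr; apply: eq_bigr => l _.
rewrite forall_ord_recl; under eq_forallb => t do rewrite /posn lift0 /=.
rewrite neqUL /=.
by case: ifP => _; rewrite ?mulr0 // mulrACA.
Qed.

Lemma avoidP_diag U n : avoidP U U n.+1 = 0.
Proof. by rewrite avoidPS eqxx. Qed.

End AvoidingWalks.

Section BinomialWindow.
Variables (R : comPzRingType) (p : R).

Definition binom_mass (N k : nat) : R := 'C(N, k)%:R * p ^+ k * (1 - p) ^+ (N - k).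

Definition binom_window (N lo hi : nat) : R := \sum_(lo <= k < hi) binom_mass N k.

Lemma binom_mass_small N k : (N < k)%N -> binom_mass N k = 0.
Proof. by move=> ltNk; rewrite /binom_mass bin_small // !mul0r. Qed.

Lemma binom_mass0S N : binom_mass N.+1 0 = (1 - p) * binom_mass N 0.
Proof. by rewrite /binom_mass !bin0 !subn0 exprS; ring. Qed.

Lemma binom_massSS N k :
  binom_mass N.+1 k.+1 = p * binom_mass N k + (1 - p) * binom_mass N k.+1.
Proof.
rewrite /binom_mass binS natrD subSS.
have [ltkN|leNk] := ltnP k N.
  by rewrite (_ : N - k = (N - k.+1).+1)%N ?exprS; [ring | lia].
by rewrite (bin_small (n := N)) ?ltnS // !mul0r mulr0 !addr0 exprS; ring.
Qed.

Lemma binom_window_recr N lo hi : (lo <= hi)%N ->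
  binom_window N lo hi.+1 = binom_window N lo hi + binom_mass N hi.
Proof. by move=> le_lo; rewrite /binom_window big_nat_recr. Qed.

Lemma binom_windowS N lo hi : binom_window N.+1 lo hi.+1 =
  p * binom_window N lo.-1 hi + (1 - p) * binom_window N lo hi.+1.
Proof.
rewrite /binom_window; elim: hi => [|hi IH].
  case: lo => [|lo]; last by rewrite !big_geq // !mulr0 addr0.
  by rewrite !big_nat1 big_geq // mulr0 add0r binom_mass0S.
have [lelo|ltlo] := leqP lo hi.+1; last by rewrite !big_geq ?mulr0 ?addr0 //; lia.
have lelo' : (lo.-1 <= hi)%N by lia.
rewrite [LHS]big_nat_recr // IH [X in _ = p * X + _]big_nat_recr //.
by rewrite [X in _ = _ + _ * X]big_nat_recr //= binom_massSS; ring.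
Qed.

Lemma binom_window_tail N lo :
  (lo <= N.+1)%N -> binom_window N lo N.+2 = binom_window N lo N.+1.
Proof. by move=> le_lo; rewrite binom_window_recr // binom_mass_small ?addr0. Qed.

Lemma binom_window_ord N lo n :
  binom_window N lo (lo + n) = \sum_(t < n) binom_mass N (lo + t).
Proof.
rewrite /binom_window -{1}(add0n lo) big_addn addKn big_mkord.
by apply: eq_bigr => t _; rewrite addnC.
Qed.

End BinomialWindow.

Section ConstantTransitions.
Variables (R : realFieldType) (P : nat -> nat -> R) (p : R).
Hypothesis P_const : forall r s, (0 < r)%N -> (0 < s)%N -> P r s = p.

Lemma avoidP_binom_window m r1 s1 r2 s2 :
  (r1 + s1 = m.+1)%N -> (r2 + s2 = m.+1)%N -> (r1 <= r2)%N ->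
  avoidP P (r1, s1) (r2, s2) m.+1 = binom_window p m r1 r2.
Proof.
have same_start n r s s' : (r + s = r + s')%N ->
    avoidP P (r, s) (r, s') n.+1 = binom_window p n r r.
  move=> eq_s; have -> : s' = s by lia.
  by rewrite avoidP_diag /binom_window big_geq.
elim: m r1 s1 r2 s2 => [|m IH] r1 s1 r2 s2 sum1 sum2;
  rewrite leq_eqVlt => /orP[/eqP eq12|lt12]; try by subst r2; apply: same_start; lia.
- have [-> -> -> ->] : [/\ r1 = 0, s1 = 1, r2 = 1 & s2 = 0]%N by split; lia.
  rewrite avoidPS /= !big_bool /stepP /= !avoidP0 /binom_window big_nat1.
  by rewrite /binom_mass bin0 !expr0 !mulr1 !mul0r !mulr0 !add0r addr0.
case: r2 lt12 sum2 => // h lt12 sum2; case: s1 sum1 => [|k] sum1; first lia.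
have neqUL : (r1, k.+1) != (h.+1, s2) by apply/eqP => -[]; lia.
rewrite avoidPS (negbTE neqUL) !big_bool binom_windowS.
(* U is forced South on the s-axis (r1 = 0), L is forced West on the r-axis
   (s2 = 0, i.e. r2 = m + 2, beyond the support of Bin(m + 1, p)). *)
case: r1 {neqUL} lt12 sum1 => [|l] lt12 sum1; case: s2 sum2 => [|j] sum2;
  rewrite /stepP /= ?P_const // ?(mul0r, mulr0, mul1r, mulr1, add0r, addr0) !IH;
  try lia.
- have -> : h = m.+1 by lia.
  by rewrite binom_window_tail //; ring.
- by [].
- have -> : h = m.+1 by lia.
  by rewrite binom_window_tail //; lia.
- by rewrite !binom_window_recr; [ring | lia..].
Qed.
End ConstantTransitions.

Theorem mainTheorem14 (R : realFieldType) (P : nat -> nat -> R) (p : R)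
  (a b x : nat) :
  0 <= p -> p <= 1 ->
  (forall r s : nat, (0 < r)%N -> (0 < s)%N -> P r s = p) ->
  B P a b x =
  \sum_(t < x.+1) ('C(a + b + x, a + t))%:R * p ^+ (a + t) * (1 - p) ^+ (b + x - t).
Proof.
move=> _ _ P_const.
rewrite B_avoidP (avoidP_binom_window P_const) ?binom_window_ord; try lia.
by apply: eq_bigr => t _; rewrite /binom_mass (_ : a + b + x - (a + t) = b + x - t)%N //; lia.
Qed.
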